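(* If $(\lambda_*,z_* )$ is a minimizer of QEPmin, then $\lambda_*$ is the leftmost eigenvalue (the one of smallest real part) of the quadratic eigenvalue problem $(PAP-\lambda I)^2z=\gamma^{-2}b_0b_0^{\top}z$ among those eigenvalues having eigenvectors in $\mathcal N(C^{\top})$.
   Context: Let $A\in\mathbb{R}^{n\times n}$ be symmetric, $C\in\mathbb{R}^{n\times m}$ ($m<n$) full column rank, $b\in\mathbb{R}^m$, $n_0=C(C^{\top}C)^{-1}b$ with $\|n_0\|<1$, $\gamma=\sqrt{1-\|n_0\|^2}$, $P=I-C(C^{\top}C)^{-1}C^{\top}$ (orthogonal projector onto $\mathcal N(C^{\top})$), $b_0=PAn_0$, assumed nonzero. An eigenvalue of the QEP is $\lambda\in\mathbb{C}$ for which a nonzero (complex) vector $z$ satisfies the equation; $z$ is then an eigenvector. QEPmin: minimize $\lambda$ over pairs $(\lambda,z)$ with $\lambda\in\mathbb{R}$, $0\neq z\in\mathcal N(C^{\top})$ and $(PAP-\lambda I)^2z=\gamma^{-2}b_0b_0^{\top}z$. *)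

From HB Require Import structures.
From mathcomp Require Import all_boot all_order all_algebra.
From mathcomp Require Import complex.
Set Implicit Arguments. Unset Strict Implicit. Unset Printing Implicit Defensive.
Import Order.TTheory GRing.Theory Num.Theory.
Local Open Scope ring_scope.

Section QEP.
Variables (R : rcfType) (n m : nat).
Variables (A : 'M[R]_n) (C : 'M[R]_(n, m)) (b : 'cV[R]_m).

Definition n0 : 'cV[R]_n := C *m invmx (C^T *m C) *m b.
Definition sqnorm (v : 'cV[R]_n) : R := (v^T *m v) 0 0.
Definition gamma : R := Num.sqrt (1 - sqnorm n0).
Definition Pmx : 'M[R]_n := 1%:M - C *m invmx (C^T *m C) *m C^T.
Definition b0 : 'cV[R]_n := Pmx *m A *m n0.

Definition QEPmx (lam : R) : 'M[R]_n :=
  let M := Pmx *m A *m Pmx - lam%:M in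
  M *m M - (gamma ^- 2) *: (b0 *m b0^T).

Definition cplx := real_complex R.
Definition QEPmxC (lam : R[i]) : 'M[R[i]]_n :=
  let M := map_mx cplx (Pmx *m A *m Pmx) - lam%:M in
  M *m M - (cplx gamma ^- 2) *: map_mx cplx (b0 *m b0^T).

Definition QEPmin_feasible (lam : R) (z : 'cV[R]_n) : Prop :=
  [/\ z != 0, C^T *m z = 0 & QEPmx lam *m z = 0].

Definition QEPmin_minimizer (lam : R) (z : 'cV[R]_n) : Prop :=
  QEPmin_feasible lam z /\
  forall lam' z', QEPmin_feasible lam' z' -> lam <= lam'.

Definition QEP_eig_in_ker (mu : R[i]) : Prop :=
  exists z : 'cV[R[i]]_n,
    [/\ z != 0, map_mx cplx C^T *m z = 0 & QEPmxC mu *m z = 0].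
End QEP.

(* Write S = PAP and g = b0 / gamma, so that the QEP reads ((S - l)^2 - g g^T) z = 0.
   Diagonalize S = U^* D U with D = diag (d_k) real and put w_k = |(U g)_k|^2.
   An eigenpair with nonreal eigenvalue mu = a + ib forces the secular equation
   sum_k w_k / (d_k - mu)^2 = 1, and the triangle inequality then gives
   sum_k w_k / ((d_k - a)^2 + b^2) >= 1.  Hence the real secular function
   f t = sum_k w_k / (d_k - t)^2 is at least 1 either at a or just left of the
   leftmost pole below a, while it is below 1 far to the left, so f t = 1 for
   some real t <= a: this t is a real eigenvalue with a real eigenvector.  To keep
   that eigenvector in N(C^T), S is first replaced by S + N (I - P) with N > Re mu,
   which acts as S on N(C^T) and moves the complement of N(C^T) to eigenvalue N. *)

From HB Require Import structures.
From mathcomp Require Import all_boot all_order all_algebra.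
From mathcomp Require Import complex sesquilinear spectral ring lra.
Set Implicit Arguments.
Unset Strict Implicit.
Unset Printing Implicit Defensive.
Import Order.TTheory GRing.Theory Num.Theory.
Local Open Scope ring_scope.
Local Open Scope sesquilinear_scope.

Definition qpencil (F : pzRingType) n (S G : 'M[F]_n) (t : F) : 'M[F]_n :=
  (S - t%:M) *m (S - t%:M) - G.

Lemma map_qpencil (F K : pzRingType) (f : {rmorphism F -> K}) n
    (S G : 'M[F]_n) (t : F) :
  map_mx f (qpencil S G t) = qpencil (map_mx f S) (map_mx f G) (f t).
Proof. by rewrite /qpencil map_mxB map_mxM map_mxB map_scalar_mx. Qed.

Lemma qpencil_conj (F : comUnitRingType) n (V D G : 'M[F]_n) (t : F) :
  V \in unitmx ->
  qpencil (invmx V *m D *m V) G t =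
  invmx V *m qpencil D (V *m G *m invmx V) t *m V.
Proof.
move=> V_unit; have shiftE : invmx V *m D *m V - t%:M = invmx V *m (D - t%:M) *m V.
  by rewrite mulmxBr mulmxBl mul_mx_scalar -scalemxAl mulVmx // scalemx1.
have GE : G = invmx V *m (V *m G *m invmx V) *m V.
  by rewrite !mulmxA mulVmx // mul1mx mulmxKV.
rewrite /qpencil shiftE; move: (D - t%:M) => X.
by rewrite mulmxBr mulmxBl -GE !mulmxA mulmxK.
Qed.

Section ShiftedPencil.
Variables (F : fieldType) (n : nat) (K S G : 'M[F]_n).
Hypotheses (K_idem : K *m K = K) (KS0 : K *m S = 0).

Lemma mulmx_qpencil_shift (N t : F) (x : 'cV_n) : K *m x = 0 ->
  qpencil (S + N *: K) G t *m x = qpencil S G t *m x.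
Proof.
have shiftE (y : 'cV_n) : K *m y = 0 -> (S + N *: K - t%:M) *m y = (S - t%:M) *m y.
  by move=> Ky; rewrite !mulmxBl mulmxDl -scalemxAl Ky scaler0 addr0.
move=> Kx; have Kx' : K *m ((S - t%:M) *m x) = 0.
  by rewrite mulmxA mulmxBr KS0 mul_mx_scalar sub0r mulNmx -scalemxAl Kx scaler0 oppr0.
by rewrite /qpencil [LHS]mulmxBl [RHS]mulmxBl -!mulmxA (shiftE _ Kx) (shiftE _ Kx').
Qed.

Lemma ker_qpencil_shift (N t : F) (x : 'cV_n) : K *m G = 0 -> t != N ->
  qpencil (S + N *: K) G t *m x = 0 -> K *m x = 0.
Proof.
move=> KG0 tN; have KshiftE : K *m (S + N *: K - t%:M) = (N - t) *: K.
  by rewrite mulmxBr mulmxDr KS0 add0r -scalemxAr K_idem mul_mx_scalar scalerBl.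
move=> /(congr1 (mulmx K)); rewrite mulmx0 /qpencil !mulmxA mulmxBr !mulmxA.
rewrite KshiftE -scalemxAl KshiftE KG0 subr0 scalerA -scalemxAl.
by move/eqP; rewrite scalemx_eq0 mulf_eq0 subr_eq0 eq_sym (negPf tN) => /eqP.
Qed.

End ShiftedPencil.

(* [Pmx C] is [1%:M - colproj C] by definition. *)
Definition colproj (F : fieldType) p q (C : 'M[F]_(p, q)) : 'M[F]_p :=
  C *m invmx (C^T *m C) *m C^T.

Lemma map_colproj (F K : fieldType) (f : {rmorphism F -> K}) p q
    (C : 'M[F]_(p, q)) :
  map_mx f (colproj C) = colproj (map_mx f C).
Proof. by rewrite /colproj !map_mxM map_invmx map_mxM map_trmx. Qed.

Lemma trmx_colproj (F : fieldType) p q (C : 'M[F]_(p, q)) :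
  (colproj C)^T = colproj C.
Proof. by rewrite /colproj !trmx_mul trmxK trmx_inv trmx_mul trmxK mulmxA. Qed.

Section ColumnProjector.
Variables (F : fieldType) (p q : nat) (C : 'M[F]_(p, q)).

Lemma colproj_ker k (x : 'M_(p, k)) : C^T *m x = 0 -> colproj C *m x = 0.
Proof. by move=> Cx; rewrite -mulmxA Cx mulmx0. Qed.

Hypothesis CtC_unit : C^T *m C \in unitmx.

Lemma trmx_mul_colproj : C^T *m colproj C = C^T.
Proof. by rewrite /colproj !mulmxA mulmxV // mul1mx. Qed.

Lemma colproj_idem : colproj C *m colproj C = colproj C.
Proof. by rewrite {1}/colproj -!mulmxA trmx_mul_colproj mulmxA. Qed.

Lemma ker_colproj k (x : 'M_(p, k)) : colproj C *m x = 0 -> C^T *m x = 0.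
Proof. by move=> Kx; rewrite -trmx_mul_colproj -mulmxA Kx mulmx0. Qed.

End ColumnProjector.

Section SecularEquation.
Variables (R : rcfType) (k : nat) (d w : 'I_k -> R).
Hypothesis w_ge0 : forall i, 0 <= w i.

Definition secular (t : R) : R := \sum_i w i / (d i - t) ^+ 2.

Definition left_of_poles (t : R) : Prop := forall i, w i != 0 -> t < d i.

Lemma secular_lt1_far t1 : left_of_poles t1 -> exists2 t0, t0 <= t1 & secular t0 < 1.
Proof.
move=> t1_left; set W := \sum_i w i; have W_ge0 : 0 <= W by exact: sumr_ge0.
exists (t1 - (W + 1)); first by lra.
have term_le i : w i / (d i - (t1 - (W + 1))) ^+ 2 <= w i / (W + 1).
  have [->|wi] := eqVneq (w i) 0; first by rewrite !mul0r.
  have := t1_left i wi => di_gt.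
  rewrite ler_wpM2l // lef_pV2 ?posrE ?exprn_gt0 //; [rewrite expr2; nra|lra|lra].
apply: le_lt_trans (ler_sum _ (fun i _ => term_le i)) _.
by rewrite -mulr_suml -/W ltr_pdivrMr ?mul1r; lra.
Qed.

Lemma secular_ge_shift a s : 0 <= s -> left_of_poles a ->
  \sum_i w i / ((d i - a) ^+ 2 + s) <= secular a.
Proof.
move=> s_ge0 a_left; apply: ler_sum => i _.
have [->|wi] := eqVneq (w i) 0; first by rewrite !mul0r.
have sq_gt0 : 0 < (d i - a) ^+ 2 by rewrite exprn_gt0 // subr_gt0 a_left.
by rewrite ler_wpM2l // lef_pV2 ?posrE ?lerDl //; lra.
Qed.

Lemma secular_ge1_near a : (left_of_poles a -> 1 <= secular a) ->
  exists t1, [/\ t1 <= a, left_of_poles t1 & 1 <= secular t1].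
Proof.
move=> a_ge1; case: (boolP [forall i, (w i != 0) ==> (a < d i)]).
  move=> /forallP a_left; exists a; split => // [i wi|].
  - by have := a_left i; rewrite wi.
  - by apply: a_ge1 => i wi; have := a_left i; rewrite wi.
rewrite negb_forall => /existsP[i1]; rewrite negb_imply -leNgt => /andP[wi1 di1].
have [im wim im_min] := @arg_minP _ _ _ i1 (fun i => w i != 0) d wi1.
have wim_gt0 : 0 < w im by rewrite lt0r wim w_ge0.
(* de ^+ 2 <= de <= w im, so the pole term of im alone reaches 1 at d im - de. *)
pose de := Num.min 1 (w im).
have de_gt0 : 0 < de by rewrite lt_min ltr01.
have de_le1 : de <= 1 by rewrite ge_min lexx.
have de_lew : de <= w im by rewrite ge_min lexx orbT.
exists (d im - de); split => [|i wi|].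
- by have := im_min i1 wi1; lra.
- by have := im_min i wi; lra.
rewrite /secular (bigD1 im) //= subKr.
rewrite -[1]addr0; apply: lerD; last first.
  by apply: sumr_ge0 => i _; rewrite divr_ge0 ?sqr_ge0.
by rewrite ler_pdivlMr ?exprn_gt0 // mul1r expr2; nra.
Qed.

Lemma secular_ivt t0 t1 : t0 <= t1 -> left_of_poles t1 ->
  secular t0 <= 1 -> 1 <= secular t1 -> exists2 t, t0 <= t <= t1 & secular t = 1.
Proof.
move=> t01 t1_left sec_t0 sec_t1.
have left_le t : t <= t1 -> left_of_poles t.
  by move=> tt1 j wj; apply: le_lt_trans tt1 (t1_left j wj).
pose p := \prod_(j | w j != 0) ('X - (d j)%:P) ^+ 2.
pose q := \sum_i w i *: \prod_(j | (w j != 0) && (j != i)) ('X - (d j)%:P) ^+ 2 - p.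
have p_gt0 t : left_of_poles t -> 0 < p.[t].
  move=> t_left; rewrite horner_prod; apply: prodr_gt0 => j wj.
  by rewrite horner_exp hornerXsubC exprn_even_gt0 //= subr_eq0 lt_eqF ?t_left.
have qE t : left_of_poles t -> q.[t] = p.[t] * (secular t - 1).
  move=> t_left; rewrite hornerD hornerN horner_sum mulrBr mulr1; congr (_ - _).
  rewrite /secular mulr_sumr; apply: eq_bigr => i _; rewrite hornerZ.
  have [->|wi] := eqVneq (w i) 0; first by rewrite !mul0r mulr0.
  have dit : d i - t != 0 by rewrite subr_eq0 gt_eqF ?t_left.
  rewrite !horner_prod [in RHS](bigD1 i) //= horner_exp hornerXsubC -sqrrN opprB.
  by field.
have [t /andP[t0t tt1] qt] : exists2 t, t0 <= t <= t1 & root q t.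
  have t0_left := left_le t0 t01.
  apply: poly_ivt => //; apply/andP; split.
  - by rewrite qE // pmulr_rle0 ?p_gt0 // subr_le0.
  - by rewrite qE // pmulr_rge0 ?p_gt0 // subr_ge0.
exists t; first by rewrite t0t.
have t_left := left_le t tt1.
by move: qt; rewrite /root qE // mulf_eq0 gt_eqF ?p_gt0 //= subr_eq0 => /eqP.
Qed.

Lemma secular_root a : (left_of_poles a -> 1 <= secular a) ->
  exists t, [/\ t <= a, left_of_poles t & secular t = 1].
Proof.
move=> a_ge1; have [t1 [t1a t1_left sec_t1]] := secular_ge1_near a_ge1.
have [t0 t01 sec_t0] := secular_lt1_far t1_left.
have [t /andP[t0t tt1] sec_t] := secular_ivt t01 t1_left (ltW sec_t0) sec_t1.
exists t; split => [|i wi|//]; first exact: le_trans t1a.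
exact: le_lt_trans tt1 (t1_left i wi).
Qed.

End SecularEquation.

Lemma qpencil_diag_mul (C : numClosedFieldType) n (e : 'rV[C]_n) (om y : 'cV[C]_n) s :
  qpencil (diag_mx e) (om *m om^t*) s *m y =
  \col_i ((e 0 i - s) ^+ 2 * y i 0 - om i 0 * (om^t* *m y) 0 0).
Proof.
rewrite /qpencil -diag_const_mx -linearB /= mulmxBl -mulmxA !mul_diag_mx.
rewrite -mulmxA [om^t* *m y]mx11_scalar mul_mx_scalar.
by apply/matrixP => i j; rewrite (ord1 j) !mxE eqxx mulr1n; ring.
Qed.

Section DiagonalPencil.
Variable R : rcfType.
Implicit Types a b : R.
Local Open Scope complex_scope.

Definition sqnormc (z : R[i]) : R := complex.Re z ^+ 2 + complex.Im z ^+ 2.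

Lemma sqnormc_ge0 z : 0 <= sqnormc z.
Proof. by rewrite addr_ge0 ?sqr_ge0. Qed.

Lemma sqnormc_eq0 z : (sqnormc z == 0) = (z == 0).
Proof.
by rewrite /sqnormc paddr_eq0 ?sqr_ge0 // !sqrf_eq0; case: z => x y; rewrite eq_complex.
Qed.

Lemma sqnormcE z : (sqnormc z)%:C = (z^*)%R * z.
Proof. by rewrite add_Re2_Im2 normCKC. Qed.

Lemma complex_secular_bound k (d w : 'I_k -> R) a b : (forall i, 0 <= w i) ->
  \sum_i (w i)%:C / ((d i)%:C - (a +i* b)) ^+ 2 = 1 ->
  1 <= \sum_i w i / ((d i - a) ^+ 2 + b ^+ 2).
Proof.
move=> w_ge0 sec1.
have normE i : `|(w i)%:C / ((d i)%:C - (a +i* b)) ^+ 2| =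
               (w i / ((d i - a) ^+ 2 + b ^+ 2))%:C.
  have sqnormE : `|(d i)%:C - (a +i* b)| ^+ 2 = ((d i - a) ^+ 2 + b ^+ 2)%:C.
    by rewrite -add_Re2_Im2 -[b ^+ 2]sqrrN -[- b]sub0r.
  by rewrite normrM normfV normrX sqnormE ger0_norm ?ler0c // -fmorphV -rmorphM.
rewrite -lecR rmorph1 rmorph_sum -[X in X <= _]normr1 -sec1.
by apply: le_trans (ler_norm_sum _ _ _) _; rewrite (eq_bigr _ (fun i _ => normE i)).
Qed.

Section DiagonalSystem.
Variables (n : nat) (d : 'I_n -> R) (om : 'cV[R[i]]_n).
Local Notation D := (diag_mx (\row_i (d i)%:C)).
Local Notation w := (fun i => sqnormc (om i 0)).

Lemma diag_qpencil_ker s (y : 'cV_n) :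
  qpencil D (om *m om^t*) s *m y = 0 <->
  forall i, ((d i)%:C - s) ^+ 2 * y i 0 = om i 0 * (om^t* *m y) 0 0.
Proof.
rewrite qpencil_diag_mul; split => [/matrixP y_eq i | y_eq].
  by apply/eqP; rewrite -subr_eq0; have := y_eq i 0; rewrite !mxE => ->.
by apply/matrixP => i j; have := y_eq i; rewrite (ord1 j) !mxE => ->; rewrite subrr.
Qed.

Lemma diag_qpencil_secular mu (y : 'cV_n) : complex.Im mu != 0 -> y != 0 ->
  qpencil D (om *m om^t*) mu *m y = 0 ->
  (exists i, om i 0 != 0) /\ \sum_i (w i)%:C / ((d i)%:C - mu) ^+ 2 = 1.
Proof.
case: mu => a b /= b_ne0 y0 /diag_qpencil_ker y_eq; set c := (om^t* *m y) 0 0 in y_eq.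
have pole_ne0 i : (d i)%:C - (a +i* b) != 0.
  apply: contraNneq b_ne0 => /(congr1 (@complex.Im R)) Im_eq.
  by have /eqP : 0 - b = 0 := Im_eq; rewrite sub0r oppr_eq0.
have yE i : y i 0 = c * om i 0 / ((d i)%:C - (a +i* b)) ^+ 2.
  by apply: (mulfI (expf_neq0 2 (pole_ne0 i))); rewrite y_eq; field; apply: pole_ne0.
have c_ne0 : c != 0.
  apply: contra_neq y0 => c0; apply/matrixP => i j.
  by rewrite (ord1 j) yE c0 !mxE !mul0r.
split.
  apply/existsP; apply: contraNT c_ne0 => /existsPn om0.
  by rewrite /c mxE big1 // => i _; rewrite !mxE (eqP (negbNE (om0 i))) conjC0 mul0r.
apply: (mulfI c_ne0); rewrite mulr1 mulr_sumr {2}/c mxE; apply: eq_bigr => i _.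
by rewrite !mxE sqnormcE yE; ring.
Qed.

Lemma diag_qpencil_secular_root t :
  left_of_poles d w t -> secular d w t = 1 ->
  (exists i, om i 0 != 0) ->
  exists2 y : 'cV_n, y != 0 & qpencil D (om *m om^t*) t%:C *m y = 0.
Proof.
move=> t_left sec_t [i0 om_i0].
have pole_ne0 i : om i 0 != 0 -> (d i)%:C - t%:C != 0.
  move=> om_i; rewrite -rmorphB fmorph_eq0 subr_eq0 gt_eqF // t_left //.
  by rewrite sqnormc_eq0.
pose y := \col_i (om i 0 / ((d i)%:C - t%:C) ^+ 2).
have y_dot : (om^t* *m y) 0 0 = 1.
  rewrite -(rmorph1 (real_complex R)) -sec_t rmorph_sum mxE; apply: eq_bigr => i _.
  by rewrite !mxE mulrA -sqnormcE rmorphM fmorphV rmorphXn rmorphB.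
exists y.
  apply: (contraNneq _ om_i0) => y0; have /eqP := congr1 (fun v : 'cV_n => v i0 0) y0.
  by rewrite !mxE mulf_eq0 invr_eq0 expf_eq0 (negPf (pole_ne0 _ om_i0)) andbF orbF.
apply/diag_qpencil_ker => i; rewrite y_dot mulr1 mxE.
have [->|om_i] := eqVneq (om i 0) 0; first by rewrite mul0r mulr0.
by field; rewrite pole_ne0.
Qed.

Lemma diag_qpencil_real_eig mu (y : 'cV_n) : y != 0 ->
  qpencil D (om *m om^t*) mu *m y = 0 ->
  exists t, t <= complex.Re mu /\
    exists2 y' : 'cV_n, y' != 0 & qpencil D (om *m om^t*) t%:C *m y' = 0.
Proof.
case: mu => a b y0 Qy; have [b0 | b_ne0] := eqVneq b 0.
  by exists a; split => //; exists y; move: Qy; rewrite b0.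
have [om_ne0 sec1] := @diag_qpencil_secular (a +i* b) y b_ne0 y0 Qy.
have a_ge1 : left_of_poles d w a -> 1 <= secular d w a.
  move=> a_left.
  apply: le_trans (complex_secular_bound (fun i => sqnormc_ge0 _) sec1) _.
  exact: (secular_ge_shift (fun i => sqnormc_ge0 _) (sqr_ge0 b) a_left).
have [t [ta t_left sec_t]] := secular_root (fun i => sqnormc_ge0 _) a_ge1.
by exists t; split => //; apply: diag_qpencil_secular_root.
Qed.

End DiagonalSystem.
End DiagonalPencil.

Section RealSymmetric.
Variable R : rcfType.
Local Notation toC := (real_complex R).

Lemma real_kernel p q (Q : 'M[R]_(p, q)) (v : 'cV[R[i]]_q) :
  v != 0 -> map_mx toC Q *m v = 0 -> exists2 x : 'cV_q, x != 0 & Q *m x = 0.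
Proof.
move=> v0 Qv.
have part_ker (f : R[i] -> R) : {morph f : u w / u + w} -> f 0 = 0 ->
    (forall a u, f (toC a * u) = a * f u) -> Q *m map_mx f v = 0.
  move=> fD f0 fZ; apply/matrixP => i j; have /matrixP/(_ i j) := Qv.
  rewrite !mxE => /(congr1 f); rewrite f0 (big_morph f fD f0) => sum0.
  by rewrite -[RHS]sum0; apply: eq_bigr => l _; rewrite !mxE fZ.
pose vRe := map_mx (@complex.Re R) v; pose vIm := map_mx (@complex.Im R) v.
have ReQ : Q *m vRe = 0.
  by apply: part_ker => [[? ?] [? ?] | | ? [? ?] /=] //; ring.
have ImQ : Q *m vIm = 0.
  by apply: part_ker => [[? ?] [? ?] | | ? [? ?] /=] //; ring.
have [Re0 | ] := eqVneq vRe 0; last by exists vRe.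
have [Im0 | ] := eqVneq vIm 0; last by exists vIm.
case/eqP: v0; apply/matrixP => i j; move/matrixP: Re0 => /(_ i j).
by move/matrixP: Im0 => /(_ i j); rewrite !mxE; case: (v i j) => x y /= -> ->.
Qed.

Lemma realsym_spectral n (S : 'M[R]_n) : S^T = S ->
  exists2 U : 'M[R[i]]_n, U \is unitarymx &
    exists d : 'I_n -> R, map_mx toC S = invmx U *m diag_mx (\row_i toC (d i)) *m U.
Proof.
move=> S_sym; set Sc := map_mx toC S.
have Sc_herm : Sc \is hermsymmx.
  apply: realsym_hermsym; last by apply/mxOverP => i j; rewrite mxE complex_real.
  by apply/is_hermitianmxP; rewrite expr0 scale1r map_mx_id // /Sc map_trmx S_sym.
exists (spectralmx Sc); first exact: spectral_unitarymx.
exists (fun i => complex.Re (spectral_diag Sc 0 i)).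
have -> : \row_i toC (complex.Re (spectral_diag Sc 0 i)) = spectral_diag Sc.
  apply/matrixP => i j; rewrite (ord1 i) !mxE.
  by have /mxOverP/(_ 0 j)/complex_realP[x ->] := hermitian_spectral_diag_real Sc_herm.
exact/orthomx_spectralP/hermitian_normalmx.
Qed.

Lemma qpencil_real_eig_left n (S : 'M[R]_n) (g : 'cV[R]_n) (mu : R[i]) (z : 'cV_n) :
  S^T = S -> z != 0 ->
  qpencil (map_mx toC S) (map_mx toC (g *m g^T)) mu *m z = 0 ->
  exists t, t <= complex.Re mu /\
    exists2 x : 'cV_n, x != 0 & qpencil S (g *m g^T) t *m x = 0.
Proof.
move=> S_sym z0 Qz; have [U U_unitary [d SE]] := realsym_spectral S_sym.
have U_unit := unitarymx_unit U_unitary.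
pose om := U *m map_mx toC g.
have g_adj : (map_mx toC g)^t* = (map_mx toC g)^T.
  by apply/matrixP => i j; rewrite !mxE; exact: conjc_real.
have outerE : U *m map_mx toC (g *m g^T) *m invmx U = om *m om^t*.
  have gE : map_mx toC (g *m g^T) = map_mx toC g *m (map_mx toC g)^T.
    by rewrite map_mxM map_trmx.
  by rewrite gE invmx_unitary // /om trmx_mul map_mxM g_adj !mulmxA.
have diagE s : qpencil (map_mx toC S) (map_mx toC (g *m g^T)) s =
    invmx U *m qpencil (diag_mx (\row_i toC (d i))) (om *m om^t*) s *m U.
  by rewrite SE (qpencil_conj _ _ _ U_unit) outerE; reflexivity.
have Uz0 : U *m z != 0.
  by apply: contraNneq z0 => Uz0; rewrite -(mulKmx U_unit z) Uz0 mulmx0.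
have QUz : qpencil (diag_mx (\row_i toC (d i))) (om *m om^t*) mu *m (U *m z) = 0.
  move/(congr1 (mulmx U)): Qz.
  by rewrite diagE mulmx0 !mulmxA mulmxV // mul1mx -!mulmxA.
have [t [t_le [y y0 Qy]]] := diag_qpencil_real_eig Uz0 QUz.
exists t; split => //; apply: (real_kernel (v := invmx U *m y)).
  by apply: contraNneq y0 => Uy0; rewrite -(mulKVmx U_unit y) Uy0 mulmx0.
by rewrite map_qpencil diagE -(mulmxA _ U) mulKVmx // -mulmxA (_ : _ *m y = 0) ?mulmx0.
Qed.

End RealSymmetric.

Lemma sqnorm_eq0 (R : rcfType) k (v : 'cV[R]_k) : sqnorm v = 0 -> v = 0.
Proof.
rewrite /sqnorm mxE => /eqP; rewrite psumr_eq0 => [/allP v0|i _]; last first.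
  by rewrite mxE -expr2 sqr_ge0.
apply/matrixP => i j; rewrite (ord1 j) mxE.
by have /implyP/(_ isT) := v0 i (mem_index_enum i); rewrite mxE -expr2 sqrf_eq0 => /eqP.
Qed.

Lemma trmx_mul_self_unit (R : rcfType) p q (C : 'M[R]_(p, q)) :
  \rank C = q -> C^T *m C \in unitmx.
Proof.
move=> C_full; rewrite -row_free_unit; apply: inj_row_free => v vCtC0.
have CvT0 : C *m v^T = 0.
  apply: sqnorm_eq0.
  by rewrite /sqnorm trmx_mul trmxK mulmxA -(mulmxA v) vCtC0 mul0mx mxE.
have CT_free : row_free C^T by rewrite /row_free mxrank_tr C_full.
by apply/eqP; rewrite -(mulmx_free_eq0 v CT_free) -trmx_eq0 trmx_mul trmxK CvT0.
Qed.

Section ProjectedQEP.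
Variables (R : rcfType) (n m : nat) (A : 'M[R]_n) (C : 'M[R]_(n, m)) (b : 'cV[R]_m).
Hypotheses (hA : A^T = A) (hC : \rank C = m).
Local Notation toC := (real_complex R).
Local Notation K := (colproj C).
Local Notation S := (Pmx C *m A *m Pmx C).
Local Notation g := ((gamma C b)^-1 *: b0 A C b).

Lemma colproj_Pmx : K *m Pmx C = 0.
Proof. by rewrite mulmxBr mulmx1 colproj_idem ?trmx_mul_self_unit // subrr. Qed.

Lemma colproj_PAP : K *m S = 0.
Proof. by rewrite !mulmxA colproj_Pmx !mul0mx. Qed.

Lemma colproj_b0 : K *m (g *m g^T) = 0.
Proof. by rewrite mulmxA -scalemxAr /b0 !mulmxA colproj_Pmx !mul0mx scaler0 mul0mx. Qed.

Lemma trmx_PAP : S^T = S.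
Proof.
have P_sym : (Pmx C)^T = Pmx C by rewrite linearB /= trmx1 trmx_colproj.
by rewrite !trmx_mul P_sym hA mulmxA.
Qed.

Lemma outer_b0 : g *m g^T = gamma C b ^- 2 *: (b0 A C b *m (b0 A C b)^T).
Proof. by rewrite linearZ -scalemxAl -scalemxAr scalerA -expr2 exprVn. Qed.

Lemma QEPmxE t : QEPmx A C b t = qpencil S (g *m g^T) t.
Proof. by rewrite outer_b0. Qed.

Lemma QEPmxCE mu :
  QEPmxC A C b mu = qpencil (map_mx toC S) (map_mx toC (g *m g^T)) mu.
Proof. by rewrite outer_b0 map_mxZ /= fmorphV rmorphXn. Qed.

Lemma QEPmin_feasible_eig lam z :
  QEPmin_feasible A C b lam z -> QEP_eig_in_ker A C b (lam%:C)%C.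
Proof.
move=> [z0 Cz Qz]; exists (map_mx toC z); split; first by rewrite map_mx_eq0.
  by rewrite -map_mxM Cz map_mx0.
by rewrite QEPmxCE -map_qpencil -QEPmxE -map_mxM Qz map_mx0.
Qed.

Lemma QEP_eig_feasible_left mu : QEP_eig_in_ker A C b mu ->
  exists t, t <= complex.Re mu /\ exists x, QEPmin_feasible A C b t x.
Proof.
move=> [zc [zc0 Czc Qzc]]; have CtC_unit := trmx_mul_self_unit hC.
pose N := complex.Re mu + 1.
have Kzc : map_mx toC K *m zc = 0.
  by rewrite map_colproj (colproj_ker (_ : _ *m zc = 0)) // map_trmx.
have KSc0 : map_mx toC K *m map_mx toC S = 0 by rewrite -map_mxM colproj_PAP map_mx0.
have Qshift : qpencil (map_mx toC (S + N *: K)) (map_mx toC (g *m g^T)) mu *m zc = 0.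
  by rewrite map_mxD map_mxZ (mulmx_qpencil_shift _ KSc0 _ _ Kzc) -QEPmxCE.
have shift_sym : (S + N *: K)^T = S + N *: K.
  by rewrite linearD linearZ /= trmx_PAP trmx_colproj.
have [t [t_le [x x0 Qx]]] := qpencil_real_eig_left shift_sym zc0 Qshift.
have tN : t != N by apply: contraTneq t_le => ->; rewrite -ltNge /N; lra.
have Kx : K *m x = 0.
  by apply: ker_qpencil_shift Qx; rewrite ?colproj_idem ?colproj_PAP ?colproj_b0.
exists t; split => //; exists x; split => //; first exact: (ker_colproj CtC_unit Kx).
by rewrite QEPmxE -(mulmx_qpencil_shift _ colproj_PAP N _ Kx).
Qed.

End ProjectedQEP.

Theorem theorem2p10 (R : rcfType) (n m : nat)
  (A : 'M[R]_n) (C : 'M[R]_(n, m)) (b : 'cV[R]_m)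
  (hA : A^T = A) (hmn : (m < n)%N) (hC : \rank C = m)
  (hn0 : sqnorm (n0 C b) < 1) (hb0 : b0 A C b != 0)
  (lam : R) (z : 'cV[R]_n) :
  QEPmin_minimizer A C b lam z ->
  QEP_eig_in_ker A C b (lam%:C)%C /\
  (forall mu : R[i], QEP_eig_in_ker A C b mu -> lam <= complex.Re mu).
Proof.
move=> [feasible lam_min]; split; first exact: QEPmin_feasible_eig feasible.
move=> mu /(QEP_eig_feasible_left hA hC) [t [t_le [x feasible_x]]].
exact: le_trans (lam_min t x feasible_x) t_le.
Qed.
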